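(* Let $D$ be an antimatter domain. Then $D$ is a GL-domain if and only if the polynomial ring $D[X]$ is a completely atomic domain.
   Context: An atom (irreducible element) of an integral domain is a nonzero nonunit $a$ such that $a=bc$ implies $b$ or $c$ is a unit. A domain is antimatter if it has no atoms. A nonzero nonunit is atomic if it is a finite product of atoms; a domain is completely atomic if every nonunit divisor of an atomic element is atomic. A nonzero polynomial $f\in D[X]$ is primitive if the only common divisors in $D$ of its coefficients are units. $D$ is a GL-domain if the product of any two primitive polynomials in $D[X]$ is primitive. *)

From HB Require Import structures.
From mathcomp Require Import all_boot all_order all_algebra.
Set Implicit Arguments. Unset Strict Implicit. Unset Printing Implicit Defensive.
Import GRing.Theory.
Local Open Scope ring_scope.

Definition divides (R : comPzRingType) (b a : R) : Prop := exists c : R, a = b * c.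

Definition atom (R : idomainType) (a : R) : Prop :=
  [/\ a != 0, a \isn't a GRing.unit &
      forall b c : R, a = b * c -> b \is a GRing.unit \/ c \is a GRing.unit].

Definition antimatter (R : idomainType) : Prop := forall a : R, ~ atom a.

Definition atomic_elt (R : idomainType) (a : R) : Prop :=
  [/\ a != 0, a \isn't a GRing.unit &
      exists s : seq R, (forall x, x \in s -> atom x) /\ a = \prod_(x <- s) x].

Definition completely_atomic (R : idomainType) : Prop :=
  forall a b : R, atomic_elt a -> divides b a -> b \isn't a GRing.unit -> atomic_elt b.

Definition primitive_poly (R : idomainType) (f : {poly R}) : Prop :=
  f != 0 /\ forall d : R, (forall i : nat, divides d f`_i) -> d \is a GRing.unit.

Definition GL_domain (R : idomainType) : Prop :=
  forall f g : {poly R}, primitive_poly f -> primitive_poly g -> primitive_poly (f * g).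

From mathcomp Require Import all_boot all_order all_algebra.
From Stdlib Require Import Classical.
From mathcomp Require Import zify.
Set Implicit Arguments. Unset Strict Implicit. Unset Printing Implicit Defensive.
Import GRing.Theory.
Local Open Scope ring_scope.

(* An atom of D[X] with a nonunit constant factor c would make c an atom of D,
   so over an antimatter D every atom of D[X] is primitive. Over any domain, a
   nonunit primitive polynomial is atomic, since a proper factorization splits
   it into primitive factors of smaller degree. Hence over a GL-domain atomic
   polynomials are primitive, and so are their divisors, which are thus atomic.
   Conversely, if D[X] is completely atomic and f, g are primitive nonunits, a
   nonunit constant dividing the atomic f g would be atomic; but its atom
   factors are primitive of positive degree and cannot divide a constant. *)

Lemma divides_trans (R : comPzRingType) (a b c : R) :
  divides a b -> divides b c -> divides a c.
Proof. by move=> [x ->] [y ->]; exists (x * y); rewrite mulrA. Qed.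

Lemma divides_polyC (R : comNzRingType) (d : R) (p : {poly R}) :
  divides d%:P p <-> forall i, divides d p`_i.
Proof.
split=> [[q ->] i | dvd_p]; first by exists q`_i; rewrite coefCM.
have dvd_p' i : exists c, p`_i == d * c by case: (dvd_p i) => c ->; exists c.
exists (\poly_(i < size p) xchoose (dvd_p' i)).
apply/polyP => i; rewrite coefCM coef_poly.
case: ltnP => [_ | le_p_i]; first exact/eqP/(xchooseP (dvd_p' i)).
by rewrite mulr0 nth_default.
Qed.

Section Atoms.
Variable R : idomainType.
Implicit Types a b : R.

Lemma atom_atomic a : atom a -> atomic_elt a.
Proof.
move=> a_atom; have [a0 a_nu _] := a_atom; split=> //.
by exists [:: a]; rewrite big_seq1; split=> // x; rewrite inE => /eqP ->.
Qed.

Lemma atomic_eltM a b : atomic_elt a -> atomic_elt b -> atomic_elt (a * b).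
Proof.
move=> [a0 a_nu [s [atom_s a_s]]] [b0 _ [t [atom_t b_t]]].
split; [exact: mulf_neq0 | by rewrite unitrM negb_and a_nu |].
exists (s ++ t); rewrite big_cat -a_s -b_t; split=> // x.
by rewrite mem_cat => /orP [/atom_s | /atom_t].
Qed.

Lemma nonatom_split a : a != 0 -> a \isn't a GRing.unit -> ~ atom a ->
  exists b c, [/\ a = b * c, b \isn't a GRing.unit & c \isn't a GRing.unit].
Proof.
move=> a0 a_nu a_natom; apply: NNPP => no_split; apply: a_natom; split=> // b c a_bc.
apply: NNPP => /not_or_and [b_nu c_nu].
by apply: no_split; exists b, c; split=> //; apply/negP.
Qed.

End Atoms.

Section Primitive.
Variable R : idomainType.
Implicit Types (c d : R) (p q : {poly R}).

Lemma polyC_unit c : (c%:P \is a GRing.unit) = (c \is a GRing.unit).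
Proof.
rewrite poly_unitE coefC /= size_polyC.
by have [-> | c0] := eqVneq c 0; rewrite ?unitr0 ?andbF.
Qed.

Lemma primitive_poly1 : primitive_poly (1 : {poly R}).
Proof.
split=> [|d /(_ 0%N) [c]]; first exact: oner_neq0.
by rewrite coefC /= => one_dc; have := @unitr1 R; rewrite one_dc unitrM => /andP [].
Qed.

Lemma primitive_poly_dvd q p : divides q p -> primitive_poly p -> primitive_poly q.
Proof.
move=> q_dvd_p [p0 p_prim]; split=> [|d /divides_polyC dvd_q].
  by apply: contraNneq p0 => q0; case: q_dvd_p => c ->; rewrite q0 mul0r.
by apply/p_prim/divides_polyC; apply: divides_trans dvd_q q_dvd_p.
Qed.

Lemma primitive_poly_size_gt1 p :
  primitive_poly p -> p \isn't a GRing.unit -> (1 < size p)%N.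
Proof.
move=> [_ p_prim] p_nu; rewrite ltnNge; apply: contraNN p_nu => /size1_polyC p_const.
rewrite p_const polyC_unit; apply/p_prim/divides_polyC.
by exists 1; rewrite mulr1 {1}p_const.
Qed.

Lemma size_dvd_polyC c p : c != 0 -> divides p c%:P -> size p = 1%N.
Proof.
move=> c0 [q c_pq]; apply/eqP.
by have := size_mul_eq1 p q; rewrite -c_pq size_polyC c0 eqxx => /esym/andP [].
Qed.

Lemma primitive_atomic p : primitive_poly p -> p \isn't a GRing.unit -> atomic_elt p.
Proof.
elim: {p}(size p) {-2}p (leqnn (size p)) => [|n IHn] p le_p_n p_prim p_nu.
  by have := primitive_poly_size_gt1 p_prim p_nu; lia.
have p0 : p != 0 by case: p_prim.
have [p_atom | p_natom] := classic (atom p); first exact: atom_atomic.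
have [q [r [p_qr q_nu r_nu]]] := nonatom_split p0 p_nu p_natom.
have q_prim : primitive_poly q by apply: primitive_poly_dvd p_prim; exists r.
have r_prim : primitive_poly r by apply: primitive_poly_dvd p_prim; exists q; rewrite mulrC.
have q0 : q != 0 by case: q_prim.
have r0 : r != 0 by case: r_prim.
have size_p : size p = (size q + size r - 1)%N by rewrite p_qr size_mul // subn1.
have gt1_q := primitive_poly_size_gt1 q_prim q_nu.
have gt1_r := primitive_poly_size_gt1 r_prim r_nu.
rewrite p_qr; apply: atomic_eltM.
- by apply: (IHn q) => //; move: le_p_n gt1_r; rewrite size_p; lia.
- by apply: (IHn r) => //; move: le_p_n gt1_q; rewrite size_p; lia.
Qed.

Lemma GL_primitive_prod (s : seq {poly R}) : GL_domain R ->
  (forall p, p \in s -> primitive_poly p) -> primitive_poly (\prod_(p <- s) p).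
Proof.
move=> GL; elim: s => [|p s IHs] prim_s; first by rewrite big_nil; exact: primitive_poly1.
rewrite big_cons; apply: GL; first by apply: prim_s; rewrite mem_head.
by apply: IHs => q s_q; apply: prim_s; rewrite inE s_q orbT.
Qed.

Lemma atom_polyC c : atom c%:P -> atom c.
Proof.
move=> [c0 c_nu c_irr]; split; first by rewrite -polyC_eq0.
  by rewrite -polyC_unit.
by move=> a b c_ab; rewrite -!polyC_unit; apply: c_irr; rewrite c_ab polyCM.
Qed.

Hypothesis antimatter_R : antimatter R.

Lemma antimatter_atom_primitive p : atom p -> primitive_poly p.
Proof.
move=> p_atom; have [p0 _ p_irr] := p_atom; split=> // d /divides_polyC [q p_dq].
have [|q_unit] := p_irr _ _ p_dq; first by rewrite polyC_unit.
move: q_unit; rewrite poly_unitE => /andP [/eqP/eq_leq/size1_polyC q_const _].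
have : atom (d * q`_0)%:P by rewrite polyCM -q_const -p_dq.
by move/atom_polyC/antimatter_R.
Qed.

Lemma antimatter_polyC_not_atomic c : ~ atomic_elt c%:P.
Proof.
move=> [c0 c_nu [[|p s] [atom_s c_ps]]].
  by move: c_nu; rewrite c_ps big_nil unitr1.
have p_atom : atom p by apply: atom_s; rewrite mem_head.
have [_ p_nu _] := p_atom.
have := primitive_poly_size_gt1 (antimatter_atom_primitive p_atom) p_nu.
rewrite (@size_dvd_polyC c) //; first by rewrite -polyC_eq0.
by exists (\prod_(q <- s) q); rewrite c_ps big_cons.
Qed.

End Primitive.

Theorem proposition4p1 (R : idomainType) :
  antimatter R -> (GL_domain R <-> completely_atomic {poly R}).
Proof.
move=> AM; split=> [GL f g [_ _ [s [atom_s ->]]] g_dvd g_nu | CA f g f_prim g_prim].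
  apply: primitive_atomic g_nu; apply: primitive_poly_dvd g_dvd _.
  by apply: GL_primitive_prod => // p /atom_s; apply: antimatter_atom_primitive.
have [f_unit | f_nu] := boolP (f \is a GRing.unit).
  by apply: primitive_poly_dvd g_prim; exists f^-1; rewrite mulrAC divrr ?mul1r.
have [g_unit | g_nu] := boolP (g \is a GRing.unit).
  by apply: primitive_poly_dvd f_prim; exists g^-1; rewrite mulrK.
have fg_atomic := atomic_eltM (primitive_atomic f_prim f_nu) (primitive_atomic g_prim g_nu).
split=> [|d /divides_polyC dvd_fg]; first by case: fg_atomic.
apply: contraT => d_nu; exfalso.
by apply: (antimatter_polyC_not_atomic AM (CA _ _ fg_atomic dvd_fg _)); rewrite polyC_unit.
Qed.
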